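(* Let $m\ge2$, $\lambda\in\mathbb{D}$, $\mathcal{D}=\{d_1,\ldots,d_m\}\subset\mathbb{C}$, and let $E=\{\sum_{n=0}^\infty a_n\lambda^n:a_n\in\mathcal{D}\}$ be the attractor of the IFS $\{f_j(z)=\lambda z+d_j\}_{j=1}^m$. Assume $E$ is connected and the overlap set $\mathcal{O}=\bigcup_{i\ne j}(E_i\cap E_j)$, $E_j=f_j(E)$, is finite. Suppose in addition there exists $C_1>0$ such that for all sufficiently large $n\in\mathbb{N}$: whenever $f\in\mathcal{F}$, $g\in\mathcal{B}$ and $|f\wedge g|=n$, then $|g(\lambda)|\ge C_1|\lambda|^n$. Then $E$ has bounded turning.
   Context: $\mathcal{B}$ is the set of power series $f(z)=\sum_{n\ge0}c_nz^n$ with $c_n\in\mathcal{D}-\mathcal{D}=\{d_i-d_j\}$ for all $n$ and $c_0\ne0$; $\mathcal{F}=\{f\in\mathcal{B}:f(\lambda)=0\}$. For power series $f,g$, $|f\wedge g|=\min\{k\ge0: f^{(k+1)}(0)\ne g^{(k+1)}(0)\}$ (the degree of their maximal common initial part). A connected set $X\subset\mathbb{C}$ has bounded turning if there is $L$ such that for all $z_0,z_1\in X$ there is a connected set $[z_0,z_1]\subset X$ containing $z_0,z_1$ with $\operatorname{diam}[z_0,z_1]\le L|z_0-z_1|$. *)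

From Stdlib Require Import Reals.
From Coquelicot Require Import Coquelicot.
Open Scope C_scope.

Definition pseries_sum (c : nat -> C) (z v : C) : Prop :=
  @is_series C_AbsRing C_NormedModule (fun n => c n * pow_n z n) v.

Definition in_digits (m : nat) (d : nat -> C) (x : C) : Prop :=
  exists i, (i < m)%nat /\ x = d i.

Definition attractor (m : nat) (d : nat -> C) (lam : C) (z : C) : Prop :=
  exists a : nat -> C, (forall n, in_digits m d (a n)) /\ pseries_sum a lam z.

Definition piece (m : nat) (d : nat -> C) (lam : C) (j : nat) (z : C) : Prop :=
  exists w, attractor m d lam w /\ z = lam * w + d j.

Definition overlap (m : nat) (d : nat -> C) (lam : C) (z : C) : Prop :=
  exists i j, (i < m)%nat /\ (j < m)%nat /\ i <> j /\
    piece m d lam i z /\ piece m d lam j z.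

Definition finite_set (X : C -> Prop) : Prop :=
  exists l : list C, forall z, X z -> List.In z l.

(* Coefficient sequences of elements of B: c_n in D - D, c_0 <> 0. *)
Definition in_B (m : nat) (d : nat -> C) (c : nat -> C) : Prop :=
  (forall n, exists i j, (i < m)%nat /\ (j < m)%nat /\ c n = d i - d j) /\
  c 0%nat <> 0.

Definition in_F (m : nat) (d : nat -> C) (lam : C) (c : nat -> C) : Prop :=
  in_B m d c /\ pseries_sum c lam 0.

(* |f ^ g| = n, i.e. n = min { k >= 0 : f^(k+1)(0) <> g^(k+1)(0) }:
   coefficients of degree 1..n agree and those of degree n+1 differ. *)
Definition common_part (f g : nat -> C) (n : nat) : Prop :=
  (forall k, (k < n)%nat -> f (S k) = g (S k)) /\ f (S n) <> g (S n).

Definition connected_set (X : C -> Prop) : Prop :=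
  forall U V : C -> Prop, @open C_UniformSpace U -> @open C_UniformSpace V ->
    (forall z, X z -> U z \/ V z) ->
    (exists z, X z /\ U z) -> (exists z, X z /\ V z) ->
    exists z, X z /\ U z /\ V z.

(* Bounded turning; diam Y <= L|z0 - z1| is written out as a bound on all
   pairwise distances in Y. *)
Definition bounded_turning (X : C -> Prop) : Prop :=
  connected_set X /\
  exists L : R, forall z0 z1, X z0 -> X z1 ->
    exists Y : C -> Prop,
      (forall z, Y z -> X z) /\ connected_set Y /\ Y z0 /\ Y z1 /\
      (forall y y', Y y -> Y y' -> (Cmod (y - y') <= L * Cmod (z0 - z1))%R).

(* If no f in F shares the first n coefficients of g in B, then |g(lambda)| >= c |lambda|^n:
   beyond the threshold N this is the hypothesis on C1 applied at the longest common part
   with some f in F, and below it a Koenig-type compactness argument in (D - D)^N bounds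
   |g(lambda)| away from 0. Hence two points of E whose level-n cylinders
   f_{a_0} o ... o f_{a_(n-1)} (E) are disjoint are at distance at least c |lambda|^n:
   after the common prefix of the addresses, a tail difference starting like some f in F
   could be completed by the digits of f to a common point. For z0, z1 in E with
   c |lambda|^(k+1) <= |z0 - z1| < c |lambda|^k the level-k cylinders containing them thus
   meet, and their union is a connected subset of E of diameter O(|lambda|^k) = O(|z0 - z1|). *)

From Stdlib Require Import Reals Lra Lia Classical ClassicalEpsilon IndefiniteDescription.
From Coquelicot Require Import Coquelicot.
Open Scope C_scope.

Lemma Cmod_pow_n (z : C) (k : nat) : Cmod (pow_n z k) = (Cmod z ^ k)%R.
Proof.
  induction k as [|k IH]; simpl.
  - apply Cmod_1.
  - change (Cmod (z * pow_n z k) = (Cmod z * Cmod z ^ k)%R).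
    now rewrite Cmod_mult, IH.
Qed.

Lemma Cmod_sub_le (x y : C) : (Cmod (x - y) <= Cmod x + Cmod y)%R.
Proof. eapply Rle_trans; [apply Cmod_triangle|]. rewrite Cmod_opp. lra. Qed.

Lemma Cmod_sub_pos (x y : C) : x <> y -> (0 < Cmod (x - y))%R.
Proof.
  intros Hxy. apply Cmod_gt_0. intros E. apply Hxy.
  apply (f_equal (fun z => z + y)) in E. ring_simplify in E. exact E.
Qed.

Lemma pow_le_compat_le1 (x : R) (a b : nat) :
  (0 <= x <= 1)%R -> (a <= b)%nat -> (x ^ b <= x ^ a)%R.
Proof.
  intros Hx Hab. induction Hab as [|b Hab IH]; [lra|]. simpl.
  assert (0 <= x ^ b)%R by (apply pow_le; lra). nra.
Qed.

Definition agree_below (n : nat) (g h : nat -> C) : Prop :=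
  forall k, (k < n)%nat -> g k = h k.

Section PowerSeries.

Variable lam : C.

Fixpoint psum (a : nat -> C) (k : nat) : C :=
  match k with
  | O => 0
  | S k => psum a k + a k * pow_n lam k
  end.

Lemma psum_ext (a b : nat -> C) (k : nat) : agree_below k a b -> psum a k = psum b k.
Proof.
  induction k as [|k IH]; intros H; simpl; [reflexivity|].
  rewrite IH, H; [reflexivity| lia |]. intros j Hj; apply H; lia.
Qed.

Lemma pseries_sum_unique (c : nat -> C) (v w : C) :
  pseries_sum c lam v -> pseries_sum c lam w -> v = w.
Proof.
  exact (@filterlim_locally_unique nat C_AbsRing C_NormedModule eventually _ _ v w).
Qed.

Lemma pseries_sum_minus (a b : nat -> C) (v w : C) :
  pseries_sum a lam v -> pseries_sum b lam w ->
  pseries_sum (fun k => a k - b k) lam (v - w).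
Proof.
  intros Ha Hb. generalize (is_series_minus _ _ _ _ Ha Hb). apply is_series_ext.
  intros n.
  change (a n * pow_n lam n + - (b n * pow_n lam n) = (a n - b n) * pow_n lam n).
  ring.
Qed.

Lemma pseries_sum_shift (a : nat -> C) (z w : C) :
  pseries_sum a lam z -> pseries_sum (fun j => a (S j)) lam w -> z = a O + lam * w.
Proof.
  intros Hz Hw. apply (pseries_sum_unique a); [exact Hz|].
  apply is_series_decr_1.
  replace (@plus C_NormedModule (a O + lam * w) (@opp C_NormedModule (a O * pow_n lam 0)))
    with (lam * w) by (change (lam * w = a O + lam * w + - (a O * 1)); ring).
  generalize (is_series_scal lam _ _ Hw). apply is_series_ext.
  intros n. change (lam * (a (S n) * pow_n lam n) = a (S n) * (lam * pow_n lam n)). ring.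
Qed.

Hypothesis Hlam : (Cmod lam < 1)%R.

Lemma pseries_sum_ex (B : R) (c : nat -> C) :
  (forall k, (Cmod (c k) <= B)%R) -> exists v, pseries_sum c lam v.
Proof.
  intros Hc.
  assert (H : @ex_series C_AbsRing C_CompleteNormedModule (fun n => c n * pow_n lam n)).
  { apply (ex_series_le _ (fun n => (B * Cmod lam ^ n)%R)).
    - intros n. change (Cmod (c n * pow_n lam n) <= B * Cmod lam ^ n)%R.
      rewrite Cmod_mult, Cmod_pow_n.
      apply Rmult_le_compat_r; [apply pow_le, Cmod_ge_0 | apply Hc].
    - exists (B * / (1 - Cmod lam))%R.
      apply (is_series_scal (V := R_NormedModule) B (fun n => (Cmod lam ^ n)%R)).
      apply is_series_geom. rewrite Rabs_pos_eq; [exact Hlam | apply Cmod_ge_0]. }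
  destruct H as [v Hv]. now exists v.
Qed.

Lemma pseries_sum_tail (B : R) (a : nat -> C) (z : C) :
  (forall k, (Cmod (a k) <= B)%R) -> pseries_sum a lam z ->
  forall k, exists w, pseries_sum (fun j => a (k + j)%nat) lam w /\
    z = psum a k + pow_n lam k * w.
Proof.
  intros HB Hz k. induction k as [|k [w [Hw Ez]]].
  - exists z. split; [exact Hz|]. simpl. change (z = 0 + 1 * z). ring.
  - destruct (pseries_sum_ex B (fun j => a (S k + j)%nat) (fun j => HB _)) as [w' Hw'].
    exists w'. split; [exact Hw'|].
    assert (Hshift : pseries_sum (fun j => a (k + S j)%nat) lam w').
    { revert Hw'. apply is_series_ext. intros n. now rewrite Nat.add_succ_r. }
    rewrite Ez, (pseries_sum_shift _ _ _ Hw Hshift), Nat.add_0_r. simpl.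
    change (psum a k + pow_n lam k * (a k + lam * w')
            = psum a k + a k * pow_n lam k + lam * pow_n lam k * w').
    ring.
Qed.

Lemma pseries_sum_norm_le (B : R) (c : nat -> C) (v : C) :
  (forall k, (Cmod (c k) <= B)%R) -> pseries_sum c lam v ->
  (Cmod v <= B / (1 - Cmod lam))%R.
Proof.
  intros Hc Hv.
  assert (HB : (0 <= B)%R) by (generalize (Hc O) (Cmod_ge_0 (c O)); lra).
  assert (Hr : (0 <= Cmod lam)%R) by apply Cmod_ge_0.
  assert (Hpart : forall N,
    (Cmod (sum_n (fun n => (c n * pow_n lam n)%C) N) <= B / (1 - Cmod lam))%R).
  { intros N. eapply Rle_trans; [apply (@norm_sum_n_m C_AbsRing C_NormedModule)|].
    eapply Rle_trans; [apply (sum_n_m_le _ (fun k => (Cmod lam ^ k * B)%R))|].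
    { intros k. change (Cmod (c k * pow_n lam k) <= Cmod lam ^ k * B)%R.
      rewrite Cmod_mult, Cmod_pow_n, Rmult_comm.
      apply Rmult_le_compat_l; [apply pow_le; lra | apply Hc]. }
    change (sum_n_m (fun k => (Cmod lam ^ k * B)%R) 0 N)
      with (sum_n (fun k => (Cmod lam ^ k * B)%R) N).
    rewrite sum_n_Reals, <- scal_sum, tech3 by lra.
    unfold Rdiv. rewrite <- Rmult_assoc.
    apply Rmult_le_compat_r; [apply Rlt_le, Rinv_0_lt_compat; lra|].
    assert (0 <= Cmod lam ^ S N)%R by (apply pow_le; lra). nra. }
  assert (Hlim : filterlim (fun N => Cmod (sum_n (fun n => (c n * pow_n lam n)%C) N))
                   eventually (locally (Cmod v))).
  { change (Cmod v) with (@norm C_AbsRing C_NormedModule v).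
    apply (filterlim_comp _ _ _ _ (@norm C_AbsRing C_NormedModule) _ (locally v) _ Hv).
    intros P HP. exact (@filterlim_norm C_AbsRing C_NormedModule v P HP). }
  exact (@filterlim_le nat eventually _ _ (fun _ => B / (1 - Cmod lam))%R
           (Cmod v) (B / (1 - Cmod lam))%R
           (filter_forall _ Hpart) Hlim (filterlim_const _)).
Qed.

Lemma pseries_sum_agree_close (B : R) (g h : nat -> C) (vg vh : C) (K : nat) :
  (forall k, (Cmod (g k) <= B)%R) -> (forall k, (Cmod (h k) <= B)%R) ->
  agree_below K g h -> pseries_sum g lam vg -> pseries_sum h lam vh ->
  (Cmod (vg - vh) <= Cmod lam ^ K * (2 * (B / (1 - Cmod lam))))%R.
Proof.
  intros Hg Hh Hagr Hvg Hvh.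
  destruct (pseries_sum_tail B g vg Hg Hvg K) as [wg [Hwg Eg]].
  destruct (pseries_sum_tail B h vh Hh Hvh K) as [wh [Hwh Eh]].
  rewrite Eg, Eh, (psum_ext _ _ _ Hagr).
  replace (psum h K + pow_n lam K * wg - (psum h K + pow_n lam K * wh))
    with (pow_n lam K * (wg - wh)) by ring.
  rewrite Cmod_mult, Cmod_pow_n.
  apply Rmult_le_compat_l; [apply pow_le, Cmod_ge_0|].
  eapply Rle_trans; [apply Cmod_sub_le|].
  generalize (pseries_sum_norm_le B _ wg (fun k => Hg _) Hwg)
             (pseries_sum_norm_le B _ wh (fun k => Hh _) Hwh).
  lra.
Qed.

End PowerSeries.

Lemma pseries_sum_at_0 (B : R) (c : nat -> C) (v : C) :
  (forall k, (Cmod (c k) <= B)%R) -> pseries_sum c 0 v -> v = c O.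
Proof.
  intros Hc Hv.
  assert (H0 : (Cmod 0 < 1)%R) by (rewrite Cmod_0; lra).
  destruct (pseries_sum_ex 0 H0 B (fun j => c (S j)) (fun j => Hc _)) as [w Hw].
  rewrite (pseries_sum_shift 0 c v w Hv Hw). ring.
Qed.

Lemma connected_singleton (z : C) : connected_set (fun w => w = z).
Proof.
  intros U V _ _ _ [z1 [E1 U1]] [z2 [E2 V2]]. subst. now exists z.
Qed.

Lemma connected_affine_image (X : C -> Prop) (p q : C) :
  connected_set X -> connected_set (fun z => exists w, X w /\ z = p + q * w).
Proof.
  intros HX U V HU HV Hcov [z1 [[w1 [Hw1 ->]] Hz1]] [z2 [[w2 [Hw2 ->]] Hz2]].
  assert (Hcont : forall x, filterlim (fun w : C => p + q * w) (locally x) (locally (p + q * x))).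
  { intros x.
    apply (@filterlim_comp_2 C C C C (locally x) (locally p) (locally (q * x))
             (locally (p + q * x)) _ (fun _ => p) (fun w => q * w)
             (fun a b => @plus C_NormedModule a b)).
    - apply filterlim_const.
    - apply (@filterlim_scal_r C_AbsRing C_NormedModule q x).
    - apply (@filterlim_plus C_AbsRing C_NormedModule p (q * x)). }
  assert (Hpre : forall W : C -> Prop, @open C_UniformSpace W ->
            @open C_UniformSpace (fun w => W (p + q * w))).
  { intros W HW. apply (open_comp (fun w : C => p + q * w) W); [|exact HW].
    intros x _. apply Hcont. }
  destruct (HX _ _ (Hpre U HU) (Hpre V HV)) as [w [Hw [HUw HVw]]].
  - intros w Hw. apply Hcov. now exists w.
  - now exists w1.
  - now exists w2.
  - exists (p + q * w). split; [now exists w | auto].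
Qed.

Lemma connected_union (X Y : C -> Prop) (z : C) :
  connected_set X -> connected_set Y -> X z -> Y z ->
  connected_set (fun w => X w \/ Y w).
Proof.
  intros HX HY Xz Yz U V HU HV Hcov [z1 [H1 U1]] [z2 [H2 V2]].
  assert (Hsplit : forall W : C -> Prop, connected_set W -> (forall w, W w -> X w \/ Y w) ->
            forall x y, W x -> U x -> W y -> V y -> exists w, (X w \/ Y w) /\ U w /\ V w).
  { intros W HW HWXY x y Wx Ux Wy Vy.
    destruct (HW U V HU HV (fun w Hw => Hcov w (HWXY w Hw))
                (ex_intro _ x (conj Wx Ux)) (ex_intro _ y (conj Wy Vy)))
      as [w [Ww UVw]].
    exists w. auto. }
  destruct (Hcov z (or_introl Xz)) as [Uz | Vz].
  - destruct H2 as [X2 | Y2].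
    + exact (Hsplit X HX (fun w H => or_introl H) z z2 Xz Uz X2 V2).
    + exact (Hsplit Y HY (fun w H => or_intror H) z z2 Yz Uz Y2 V2).
  - destruct H1 as [X1 | Y1].
    + exact (Hsplit X HX (fun w H => or_introl H) z1 z X1 U1 Xz Vz).
    + exact (Hsplit Y HY (fun w H => or_intror H) z1 z Y1 U1 Yz Vz).
Qed.

Section Attractor.

Variables (m : nat) (d : nat -> C) (lam : C).
Hypothesis Hlam : (Cmod lam < 1)%R.
Variable B : R.
Hypothesis HdB : forall i, (i < m)%nat -> (Cmod (d i) <= B)%R.

Definition digits (a : nat -> C) : Prop := forall k, in_digits m d (a k).

Lemma digits_norm_le (a : nat -> C) : digits a -> forall k, (Cmod (a k) <= B)%R.
Proof. intros Ha k. destruct (Ha k) as [i [Hi ->]]. auto. Qed.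

Lemma attractor_norm_le (z : C) : attractor m d lam z -> (Cmod z <= B / (1 - Cmod lam))%R.
Proof.
  intros [a [Ha Hz]]. exact (pseries_sum_norm_le lam Hlam B a z (digits_norm_le a Ha) Hz).
Qed.

(* The cylinder set f_{a_0} o ... o f_{a_(n-1)} (E). *)
Definition cylinder (a : nat -> C) (n : nat) (z : C) : Prop :=
  exists w, attractor m d lam w /\ z = psum lam a n + pow_n lam n * w.

Lemma cylinder_of_pseries (a : nat -> C) (z : C) (n : nat) :
  digits a -> pseries_sum a lam z -> cylinder a n z.
Proof.
  intros Ha Hz.
  destruct (pseries_sum_tail lam Hlam B a z (digits_norm_le a Ha) Hz n) as [w [Hw Ez]].
  exists w. split; [|exact Ez].
  exists (fun j => a (n + j)%nat). split; [intros j; apply Ha | exact Hw].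
Qed.

Lemma attractor_of_cylinder (a : nat -> C) (n : nat) (z : C) :
  digits a -> cylinder a n z -> attractor m d lam z.
Proof.
  intros Ha [w [[e [He Hw]] ->]].
  set (s := fun j => if Nat.ltb j n then a j else e (j - n)%nat).
  assert (Hs : digits s) by (intros j; unfold s; destruct (Nat.ltb_spec j n); auto).
  destruct (pseries_sum_ex lam Hlam B s (digits_norm_le s Hs)) as [z Hz].
  destruct (pseries_sum_tail lam Hlam B s z (digits_norm_le s Hs) Hz n) as [w' [Hw' Ez]].
  assert (Ew : w' = w).
  { apply (pseries_sum_unique lam e); [|exact Hw]. revert Hw'. apply is_series_ext.
    intros j. unfold s. destruct (Nat.ltb_spec (n + j) n); [lia|].
    now replace (n + j - n)%nat with j by lia. }
  assert (Ep : psum lam s n = psum lam a n).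
  { apply psum_ext. intros j Hj. unfold s. now destruct (Nat.ltb_spec j n); [|lia]. }
  exists s. split; [exact Hs|]. rewrite <- Ep, <- Ew, <- Ez. exact Hz.
Qed.

Lemma cylinder_ext (a b : nat -> C) (n : nat) (z : C) :
  agree_below n a b -> cylinder a n z -> cylinder b n z.
Proof. intros Hab [w [Hw ->]]. exists w. split; [exact Hw|]. now rewrite (psum_ext lam a b n Hab). Qed.

Lemma connected_cylinder (a : nat -> C) (n : nat) :
  connected_set (attractor m d lam) -> connected_set (cylinder a n).
Proof. apply connected_affine_image. Qed.

Lemma cylinder_dist_le (a : nat -> C) (n : nat) (y y' : C) :
  cylinder a n y -> cylinder a n y' ->
  (Cmod (y - y') <= Cmod lam ^ n * (2 * (B / (1 - Cmod lam))))%R.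
Proof.
  intros [w [Hw ->]] [w' [Hw' ->]].
  replace (psum lam a n + pow_n lam n * w - (psum lam a n + pow_n lam n * w'))
    with (pow_n lam n * (w - w')) by ring.
  rewrite Cmod_mult, Cmod_pow_n.
  apply Rmult_le_compat_l; [apply pow_le, Cmod_ge_0|].
  eapply Rle_trans; [apply Cmod_sub_le|].
  generalize (attractor_norm_le w Hw) (attractor_norm_le w' Hw'). lra.
Qed.

End Attractor.

Lemma finite_choice_eps (m : nat) (P : nat -> R -> Prop) :
  (forall i e e', (e <= e')%R -> P i e -> P i e') ->
  (forall e, (0 < e)%R -> exists i, (i < m)%nat /\ P i e) ->
  exists i, (i < m)%nat /\ forall e, (0 < e)%R -> P i e.
Proof.
  intros Hmon. induction m as [|m IH]; intros Hex.
  - destruct (Hex 1%R Rlt_0_1) as [i [Hi _]]. lia.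
  - destruct (classic (forall e, (0 < e)%R -> P m e)) as [Hall | Hnot].
    + exists m. split; [lia | exact Hall].
    + apply not_all_ex_not in Hnot as [e0 Hnot].
      apply imply_to_and in Hnot as [He0 HnP].
      destruct IH as [i [Hi HP]].
      * intros e He.
        destruct (Hex (Rmin e e0) (Rmin_glb_lt _ _ _ He He0)) as [i [Hi HPi]].
        exists i. split.
        -- destruct (Nat.eq_dec i m) as [->|]; [|lia].
           exfalso. exact (HnP (Hmon m _ _ (Rmin_r e e0) HPi)).
        -- exact (Hmon i _ _ (Rmin_l e e0) HPi).
      * exists i. split; [lia | exact HP].
Qed.

Lemma first_index (P : nat -> Prop) (n : nat) :
  P n -> exists p, P p /\ forall k, (k < p)%nat -> ~ P k.
Proof.
  induction n as [n IH] using (well_founded_induction Wf_nat.lt_wf). intros Pn.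
  destruct (classic (exists k, (k < n)%nat /\ P k)) as [[k [Hk Pk]] | Hno].
  - exact (IH k Hk Pk).
  - exists n. split; [exact Pn|]. intros k Hk Pk. apply Hno. eauto.
Qed.

Lemma crossing_index (Q : nat -> Prop) (N j : nat) :
  Q N -> ~ Q (N + j)%nat -> exists l, (N <= l)%nat /\ Q l /\ ~ Q (S l).
Proof.
  revert N. induction j as [|j IH]; intros N HQ Hn.
  - rewrite Nat.add_0_r in Hn. contradiction.
  - destruct (classic (Q (S N))) as [H|H].
    + destruct (IH (S N) H) as [l [Hl HQl]]; [now rewrite Nat.add_succ_comm|].
      exists l. split; [lia | exact HQl].
    + exists N. auto.
Qed.

Definition upd (s : nat -> C) (n : nat) (x : C) : nat -> C :=
  fun k => if Nat.eqb k n then x else s k.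

Section Compactness.

Variables (m : nat) (d : nat -> C) (lam : C).
Hypothesis Hlam : (Cmod lam < 1)%R.
Variable B : R.
Hypothesis HdB : forall i, (i < m)%nat -> (Cmod (d i) <= B)%R.

Definition in_DD (x : C) : Prop :=
  exists i j, (i < m)%nat /\ (j < m)%nat /\ x = d i - d j.

Lemma DD_norm_le (x : C) : in_DD x -> (Cmod x <= 2 * B)%R.
Proof.
  intros [i [j [Hi [Hj ->]]]]. eapply Rle_trans; [apply Cmod_sub_le|].
  generalize (HdB i Hi) (HdB j Hj). lra.
Qed.

Variable G : (nat -> C) -> Prop.
Hypothesis HG : forall g, G g -> forall k, in_DD (g k).

Definition approx_zero (n : nat) (s : nat -> C) : Prop :=
  forall e, (0 < e)%R -> exists g v, G g /\ agree_below n g s /\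
    pseries_sum g lam v /\ (Cmod v < e)%R.

Lemma approx_zero_extend (n : nat) (s : nat -> C) :
  approx_zero n s -> exists x, in_DD x /\ approx_zero (S n) (upd s n x).
Proof.
  intros Hs.
  set (P := fun x e => exists g v, G g /\ agree_below (S n) g (upd s n x) /\
                         pseries_sum g lam v /\ (Cmod v < e)%R).
  assert (Pmon : forall x e e', (e <= e')%R -> P x e -> P x e').
  { intros x e e' Hee' [g [v [Gg [Hag [Hv Hlt]]]]]. exists g, v. repeat split; auto. lra. }
  assert (Hpairs : forall e, (0 < e)%R -> exists i, (i < m)%nat /\
            exists j, (j < m)%nat /\ P (d i - d j) e).
  { intros e He. destruct (Hs e He) as [g [v [Gg [Hag [Hv Hlt]]]]].
    destruct (HG g Gg n) as [i [j [Hi [Hj Egn]]]].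
    exists i. split; [exact Hi|]. exists j. split; [exact Hj|].
    exists g, v. repeat split; auto.
    intros k Hk. unfold upd. destruct (Nat.eqb_spec k n) as [->|]; [exact Egn|].
    apply Hag. lia. }
  destruct (finite_choice_eps m (fun i e => exists j, (j < m)%nat /\ P (d i - d j) e))
    as [i [Hi Hall]]; [|exact Hpairs|].
  { intros i e e' Hee' [j [Hj HP]]. exists j. split; [exact Hj | exact (Pmon _ _ _ Hee' HP)]. }
  destruct (finite_choice_eps m (fun j e => P (d i - d j) e)) as [j [Hj HP]];
    [intros j; apply Pmon | exact Hall |].
  exists (d i - d j). split; [now exists i, j | exact HP].
Qed.

(* Koenig's lemma: digits are chosen one at a time so that each prefix keeps [approx_zero]. *)
Definition next_digit (n : nat) (s : nat -> C) : C :=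
  epsilon (inhabits (0 : C)) (fun x => in_DD x /\ approx_zero (S n) (upd s n x)).

Fixpoint approx_seq (n : nat) : nat -> C :=
  match n with
  | O => fun _ => 0
  | S n => upd (approx_seq n) n (next_digit n (approx_seq n))
  end.

Definition limit_seq (k : nat) : C := next_digit k (approx_seq k).

Hypothesis Hzero : approx_zero 0 (fun _ => 0).

Lemma approx_seq_good (n : nat) :
  approx_zero n (approx_seq n) /\ in_DD (limit_seq n).
Proof.
  assert (Hgood : forall n, approx_zero n (approx_seq n)).
  { induction n0 as [|n0 IH]; [exact Hzero|].
    exact (proj2 (epsilon_spec (inhabits (0 : C)) _ (approx_zero_extend _ _ IH))). }
  split; [apply Hgood|].
  exact (proj1 (epsilon_spec (inhabits (0 : C)) _ (approx_zero_extend _ _ (Hgood n)))).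
Qed.

Lemma approx_seq_agree (n : nat) : agree_below n (approx_seq n) limit_seq.
Proof.
  induction n as [|n IH]; intros k Hk; [lia|]. simpl. unfold upd.
  destruct (Nat.eqb_spec k n) as [->|]; [reflexivity|]. apply IH. lia.
Qed.

Lemma limit_seq_approx (n : nat) : approx_zero n limit_seq.
Proof.
  intros e He. destruct (proj1 (approx_seq_good n) e He) as [g [v [Gg [Hag Hv]]]].
  exists g, v. repeat split; try apply Hv; auto.
  intros k Hk. rewrite (Hag k Hk). exact (approx_seq_agree n k Hk).
Qed.

Lemma limit_seq_sum_zero : pseries_sum limit_seq lam 0.
Proof.
  assert (Hb : forall k, (Cmod (limit_seq k) <= 2 * B)%R)
    by (intros k; apply DD_norm_le, approx_seq_good).
  destruct (pseries_sum_ex lam Hlam _ _ Hb) as [v Hv].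
  replace (RtoC 0) with v; [exact Hv|].
  destruct (Ceq_dec v 0) as [E|Hne]; [exact E|]. exfalso.
  assert (Hpos : (0 < Cmod v)%R) by (apply Cmod_gt_0; exact Hne).
  set (e := (Cmod v / 2)%R).
  assert (Hr : (0 <= Cmod lam)%R) by apply Cmod_ge_0.
  set (T := (2 * (2 * B / (1 - Cmod lam)))%R).
  assert (HB : (0 <= B)%R) by (generalize (Hb O) (Cmod_ge_0 (limit_seq O)); lra).
  assert (HT : (0 <= T)%R) by (unfold T; apply Rmult_le_pos; [lra | apply Rdiv_le_0_compat; lra]).
  destruct (pow_lt_1_zero (Cmod lam) ltac:(rewrite Rabs_pos_eq; lra) (e / (T + 1))%R)
    as [K HK]; [unfold e; apply Rdiv_lt_0_compat; lra|].
  specialize (HK K (le_n K)). rewrite Rabs_pos_eq in HK by (apply pow_le; lra).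
  destruct (limit_seq_approx K e ltac:(unfold e; lra)) as [g [vg [Gg [Hag [Hvg Hlt]]]]].
  assert (Hclose := pseries_sum_agree_close lam Hlam (2 * B) g limit_seq vg v K
                      (fun k => DD_norm_le _ (HG g Gg k)) Hb Hag Hvg Hv).
  fold T in Hclose.
  assert (HKT : (Cmod lam ^ K * T <= e)%R).
  { apply (Rmult_lt_compat_r (T + 1)) in HK; [|lra].
    unfold Rdiv in HK. rewrite Rmult_assoc, Rinv_l, Rmult_1_r in HK by lra.
    assert (0 <= Cmod lam ^ K)%R by (apply pow_le; lra). nra. }
  assert (Htri : (Cmod v <= Cmod vg + Cmod (vg - v))%R).
  { replace v with (vg - (vg - v)) at 1 by ring. apply Cmod_sub_le. }
  unfold e in *. lra.
Qed.

End Compactness.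

Section Separation.

Variables (m : nat) (d : nat -> C) (lam : C).
Hypothesis Hlam : (Cmod lam < 1)%R.
Variable B : R.
Hypothesis HdB : forall i, (i < m)%nat -> (Cmod (d i) <= B)%R.

Definition prefix_outside_F (n : nat) (g : nat -> C) : Prop :=
  forall f, in_F m d lam f -> exists k, (k < n)%nat /\ f k <> g k.

Lemma prefix_outside_F_uniform_bound (N : nat) :
  exists c0, (0 < c0)%R /\ forall g, in_B m d g -> prefix_outside_F (S N) g ->
    forall v, pseries_sum g lam v -> (c0 <= Cmod v)%R.
Proof.
  apply NNPP. intros Hno.
  set (G := fun g => in_B m d g /\ prefix_outside_F (S N) g).
  assert (HG : forall g, G g -> forall k, in_DD m d (g k)) by (intros g [[Hg _] _]; exact Hg).
  assert (Hzero : approx_zero lam G 0 (fun _ => 0)).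
  { intros e He. apply NNPP. intros Hne. apply Hno. exists e. split; [exact He|].
    intros g Hg Hout v Hv. apply Rnot_lt_le. intros Hlt. apply Hne.
    exists g, v. split; [split; assumption|]. split; [intros k Hk; lia | auto]. }
  set (h := limit_seq m d lam G).
  assert (HhF : in_F m d lam h).
  { split; [split|].
    - intros k. exact (proj2 (approx_seq_good m d lam G HG Hzero k)).
    - destruct (limit_seq_approx m d lam G HG Hzero 1 1%R Rlt_0_1)
        as [g [_ [[[_ Hg0] _] [Hag _]]]].
      intros E. apply Hg0. rewrite (Hag O); [exact E | lia].
    - exact (limit_seq_sum_zero m d lam Hlam B HdB G HG Hzero). }
  destruct (limit_seq_approx m d lam G HG Hzero (S N) 1%R Rlt_0_1)
    as [g [_ [[_ Hout] [Hag _]]]].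
  destruct (Hout h HhF) as [k [Hk Hne]]. apply Hne. symmetry. exact (Hag k Hk).
Qed.

Lemma prefix_outside_F_lower_bound (C1 : R) (N : nat) :
  (0 < C1)%R ->
  (forall n, (N <= n)%nat -> forall f g, in_F m d lam f -> in_B m d g ->
     common_part f g n -> forall v, pseries_sum g lam v -> (C1 * Cmod lam ^ n <= Cmod v)%R) ->
  exists c, (0 < c)%R /\ forall n g, in_B m d g -> prefix_outside_F n g ->
    forall v, pseries_sum g lam v -> (c * Cmod lam ^ n <= Cmod v)%R.
Proof.
  intros HC1 HN.
  destruct (prefix_outside_F_uniform_bound N) as [c0 [Hc0 H0]].
  assert (Hr : (0 <= Cmod lam)%R) by apply Cmod_ge_0.
  assert (Hc : (0 < Rmin C1 c0)%R) by (apply Rmin_glb_lt; auto).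
  exists (Rmin C1 c0). split; [exact Hc|].
  intros n g Hg Hout v Hv.
  set (Q := fun l => exists f, in_F m d lam f /\ forall k, (k <= l)%nat -> f k = g k).
  destruct (classic (Q N)) as [HQ | HQ].
  - (* apply the hypothesis at the longest common part of g with some f in F *)
    assert (HnQ : ~ Q (N + n)%nat).
    { intros [f [Hf Hag]]. destruct (Hout f Hf) as [k [Hk Hne]]. apply Hne, Hag. lia. }
    destruct (crossing_index Q N n HQ HnQ) as [l [HNl [[f [Hf Hag]] HnS]]].
    assert (Hln : (l < n)%nat).
    { destruct (Nat.lt_ge_cases l n) as [H|H]; [exact H|]. exfalso.
      destruct (Hout f Hf) as [k [Hk Hne]]. apply Hne, Hag. lia. }
    assert (Hcp : common_part f g l).
    { split; [intros k Hk; apply Hag; lia|].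
      intros E. apply HnS. exists f. split; [exact Hf|]. intros k Hk.
      destruct (Nat.eq_dec k (S l)) as [->|]; [exact E | apply Hag; lia]. }
    eapply Rle_trans; [|exact (HN l HNl f g Hf Hg Hcp v Hv)].
    apply Rmult_le_compat; [lra | apply pow_le; lra | apply Rmin_l|].
    apply pow_le_compat_le1; [lra | lia].
  - assert (Hv0 : (c0 <= Cmod v)%R).
    { apply (H0 g Hg); [|exact Hv]. intros f Hf. apply NNPP. intros Hn. apply HQ.
      exists f. split; [exact Hf|]. intros k Hk. apply NNPP. intros Hne. apply Hn.
      exists k. split; [lia | exact Hne]. }
    assert (Cmod lam ^ n <= 1)%R by (apply (pow_le_compat_le1 _ 0); [lra | lia]).
    assert (0 <= Cmod lam ^ n)%R by (apply pow_le; lra).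
    assert (Rmin C1 c0 <= c0)%R by apply Rmin_r. nra.
Qed.

Lemma DD_split (f : nat -> C) :
  (forall j, in_DD m d (f j)) ->
  exists a b, digits m d a /\ digits m d b /\ forall j, f j = a j - b j.
Proof.
  intros Hf.
  destruct (functional_choice
              (fun j (ij : nat * nat) => (fst ij < m)%nat /\ (snd ij < m)%nat /\
                                          f j = d (fst ij) - d (snd ij)))
    as [ch Hch].
  { intros j. destruct (Hf j) as [i [i' H]]. now exists (i, i'). }
  exists (fun j => d (fst (ch j))), (fun j => d (snd (ch j))).
  split; [|split].
  - intros j. exists (fst (ch j)). split; [apply Hch | reflexivity].
  - intros j. exists (snd (ch j)). split; [apply Hch | reflexivity].
  - intros j. apply Hch.
Qed.

(* Splice the digits of a zero of F (written as a difference of digit sequences)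
   after the common prefix of length [p] of [a] and [b]. *)
Lemma cylinders_meet_of_F_prefix (a b f : nat -> C) (p n : nat) :
  digits m d a -> digits m d b -> (p <= n)%nat -> agree_below p a b ->
  in_F m d lam f -> agree_below (n - p) f (fun j => a (p + j)%nat - b (p + j)%nat) ->
  exists v, cylinder m d lam a n v /\ cylinder m d lam b n v.
Proof.
  intros Ha Hb Hpn Hab [[HfDD _] Hf0] Hfg.
  destruct (DD_split f HfDD) as [fa [fb [Hfa [Hfb Ef]]]].
  set (a' := fun k => if Nat.ltb k n then a k else fa (k - p)%nat).
  set (b' := fun k => if Nat.ltb k n then b k else fb (k - p)%nat).
  assert (Ha' : digits m d a') by (intros k; unfold a'; destruct (Nat.ltb_spec k n); auto).
  assert (Hb' : digits m d b') by (intros k; unfold b'; destruct (Nat.ltb_spec k n); auto).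
  assert (Haa : agree_below n a' a) by (intros k Hk; unfold a'; destruct (Nat.ltb_spec k n); [auto | lia]).
  assert (Hbb : agree_below n b' b) by (intros k Hk; unfold b'; destruct (Nat.ltb_spec k n); [auto | lia]).
  destruct (pseries_sum_ex lam Hlam B a' (digits_norm_le m d B HdB a' Ha')) as [va Hva].
  destruct (pseries_sum_ex lam Hlam B b' (digits_norm_le m d B HdB b' Hb')) as [vb Hvb].
  destruct (pseries_sum_tail lam Hlam B a' va (digits_norm_le m d B HdB a' Ha') Hva p)
    as [wa [Hwa Ea]].
  destruct (pseries_sum_tail lam Hlam B b' vb (digits_norm_le m d B HdB b' Hb') Hvb p)
    as [wb [Hwb Eb]].
  assert (Hw : wa - wb = 0).
  { apply (pseries_sum_unique lam f); [|exact Hf0].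
    generalize (pseries_sum_minus lam _ _ _ _ Hwa Hwb). apply is_series_ext.
    intros j. f_equal. unfold a', b'. destruct (Nat.ltb_spec (p + j) n).
    - symmetry. apply Hfg. lia.
    - replace (p + j - p)%nat with j by lia. symmetry. apply Ef. }
  assert (Hpsum : psum lam a' p = psum lam b' p).
  { apply psum_ext. intros k Hk. rewrite (Haa k), (Hbb k) by lia. apply Hab, Hk. }
  assert (Evab : va = vb).
  { rewrite Ea, Eb, Hpsum. replace wa with (wb + (wa - wb)) by ring. rewrite Hw. ring. }
  exists va. split.
  - exact (cylinder_ext m d lam a' a n va Haa (cylinder_of_pseries m d lam Hlam B HdB a' va n Ha' Hva)).
  - rewrite Evab.
    exact (cylinder_ext m d lam b' b n vb Hbb (cylinder_of_pseries m d lam Hlam B HdB b' vb n Hb' Hvb)).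
Qed.

Variable c : R.
Hypothesis Hc : forall n g, in_B m d g -> prefix_outside_F n g ->
  forall v, pseries_sum g lam v -> (c * Cmod lam ^ n <= Cmod v)%R.

Lemma cylinder_separation (n : nat) (a b : nat -> C) (x y : C) :
  digits m d a -> digits m d b -> pseries_sum a lam x -> pseries_sum b lam y ->
  ~ (exists v, cylinder m d lam a n v /\ cylinder m d lam b n v) ->
  (c * Cmod lam ^ n <= Cmod (x - y))%R.
Proof.
  intros Ha Hb Hx Hy Hdisj.
  assert (Hab := digits_norm_le m d B HdB a Ha).
  assert (Hbb := digits_norm_le m d B HdB b Hb).
  assert (Hex : exists k, (k < n)%nat /\ a k <> b k).
  { apply NNPP. intros Hn. apply Hdisj. exists x. split.
    - exact (cylinder_of_pseries m d lam Hlam B HdB a x n Ha Hx).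
    - apply (cylinder_ext m d lam a b n x); [|exact (cylinder_of_pseries m d lam Hlam B HdB a x n Ha Hx)].
      intros k Hk. apply NNPP. intros Hne. apply Hn. now exists k. }
  destruct Hex as [k0 Hk0].
  destruct (first_index (fun k => (k < n)%nat /\ a k <> b k) k0 Hk0) as [p [[Hpn Hp] Hmin]].
  assert (Hbelow : agree_below p a b).
  { intros k Hk. apply NNPP. intros Hne. apply (Hmin k Hk). split; [lia | exact Hne]. }
  destruct (pseries_sum_tail lam Hlam B a x Hab Hx p) as [wa [Hwa Ea]].
  destruct (pseries_sum_tail lam Hlam B b y Hbb Hy p) as [wb [Hwb Eb]].
  set (g := fun j => a (p + j)%nat - b (p + j)%nat).
  assert (HgB : in_B m d g).
  { split.
    - intros j. destruct (Ha (p + j)%nat) as [i [Hi Ei]]. destruct (Hb (p + j)%nat) as [i' [Hi' Ei']].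
      exists i, i'. unfold g. rewrite Ei, Ei'. auto.
    - unfold g. rewrite Nat.add_0_r. intros E. apply Hp.
      apply (f_equal (fun z => z + b p)) in E. ring_simplify in E. exact E. }
  assert (Hout : prefix_outside_F (n - p) g).
  { intros f Hf. apply NNPP. intros Hn. apply Hdisj.
    apply (cylinders_meet_of_F_prefix a b f p n Ha Hb ltac:(lia) Hbelow Hf).
    intros k Hk. apply NNPP. intros Hne. apply Hn. now exists k. }
  assert (Hlow := Hc (n - p) g HgB Hout (wa - wb) (pseries_sum_minus lam _ _ _ _ Hwa Hwb)).
  replace (x - y) with (pow_n lam p * (wa - wb))
    by (rewrite Ea, Eb, (psum_ext lam a b p Hbelow); ring).
  rewrite Cmod_mult, Cmod_pow_n.
  replace n with (p + (n - p))%nat at 1 by lia. rewrite pow_add.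
  assert (0 <= Cmod lam ^ p)%R by (apply pow_le, Cmod_ge_0).
  nra.
Qed.

End Separation.

Lemma digit_bound (m : nat) (d : nat -> C) :
  exists B, (0 <= B)%R /\ forall i, (i < m)%nat -> (Cmod (d i) <= B)%R.
Proof.
  induction m as [|m [B [HB H]]].
  - exists 0%R. split; [lra | intros; lia].
  - exists (Rmax B (Cmod (d m))). split; [eapply Rle_trans; [exact HB | apply Rmax_l]|].
    intros i Hi. destruct (Nat.eq_dec i m) as [->|]; [apply Rmax_r|].
    eapply Rle_trans; [apply H; lia | apply Rmax_l].
Qed.

Definition joins_within (X : C -> Prop) (L : R) (z0 z1 : C) : Prop :=
  exists Y : C -> Prop,
    (forall z, Y z -> X z) /\ connected_set Y /\ Y z0 /\ Y z1 /\
    (forall y y', Y y -> Y y' -> (Cmod (y - y') <= L * Cmod (z0 - z1))%R).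

Lemma joins_within_le (X : C -> Prop) (L L' : R) (z0 z1 : C) :
  (L <= L')%R -> joins_within X L z0 z1 -> joins_within X L' z0 z1.
Proof.
  intros HL [Y [HYX [HY [Y0 [Y1 Hdiam]]]]]. exists Y. repeat split; auto.
  intros y y' Hy Hy'. eapply Rle_trans; [exact (Hdiam y y' Hy Hy')|].
  apply Rmult_le_compat_r; [apply Cmod_ge_0 | exact HL].
Qed.

(* Pairs at distance at least [c] are joined by the whole bounded set. *)
Lemma bounded_turning_of_local (X : C -> Prop) (M c L : R) :
  connected_set X -> (forall z, X z -> (Cmod z <= M)%R) -> (0 < c)%R -> (0 <= L)%R ->
  (forall z0 z1, X z0 -> X z1 -> z0 <> z1 -> (Cmod (z0 - z1) < c)%R ->
     joins_within X L z0 z1) ->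
  bounded_turning X.
Proof.
  intros Hconn HM Hc HL Hlocal. split; [exact Hconn|].
  exists (2 * M / c + L)%R. intros z0 z1 H0 H1. change (joins_within X (2 * M / c + L) z0 z1).
  assert (HM0 : (0 <= M)%R) by (generalize (HM z0 H0) (Cmod_ge_0 z0); lra).
  assert (HMc : (0 <= 2 * M / c)%R) by (apply Rdiv_le_0_compat; lra).
  destruct (Ceq_dec z0 z1) as [<- | Hne].
  - exists (fun w => w = z0). repeat split; auto; [intros w ->; exact H0 | apply connected_singleton|].
    intros y y' -> ->. replace (z0 - z0) with (RtoC 0) by ring. rewrite Cmod_0. lra.
  - destruct (Rlt_le_dec (Cmod (z0 - z1)) c) as [Hnear | Hfar].
    + apply (joins_within_le X L); [lra | exact (Hlocal z0 z1 H0 H1 Hne Hnear)].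
    + exists X. repeat split; auto. intros y y' Hy Hy'.
      eapply Rle_trans; [apply Cmod_sub_le|].
      assert (H2M : (2 * M <= 2 * M / c * Cmod (z0 - z1))%R).
      { replace (2 * M)%R with (2 * M / c * c)%R at 1 by (field; lra).
        apply Rmult_le_compat_l; lra. }
      generalize (HM y Hy) (HM y' Hy') (Cmod_ge_0 (z0 - z1)). nra.
Qed.

Section BoundedTurning.

Variables (m : nat) (d : nat -> C) (lam : C).
Hypothesis Hlam : (Cmod lam < 1)%R.
Variable B : R.
Hypothesis HdB : forall i, (i < m)%nat -> (Cmod (d i) <= B)%R.
Variable c : R.
Hypothesis Hc0 : (0 < c)%R.
Hypothesis Hc : forall n g, in_B m d g -> prefix_outside_F m d lam n g ->
  forall v, pseries_sum g lam v -> (c * Cmod lam ^ n <= Cmod v)%R.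

Let M := (B / (1 - Cmod lam))%R.

Lemma meeting_cylinders_dist_le (a b : nat -> C) (k : nat) (v y y' : C) :
  cylinder m d lam a k v -> cylinder m d lam b k v ->
  (cylinder m d lam a k y \/ cylinder m d lam b k y) ->
  (cylinder m d lam a k y' \/ cylinder m d lam b k y') ->
  (Cmod (y - y') <= Cmod lam ^ k * (4 * M))%R.
Proof.
  intros Hav Hbv Hy Hy'.
  assert (Hvia : forall s s', (cylinder m d lam s k y /\ cylinder m d lam s k v) ->
            (cylinder m d lam s' k y' /\ cylinder m d lam s' k v) ->
            (Cmod (y - y') <= Cmod lam ^ k * (4 * M))%R).
  { intros s s' [Hsy Hsv] [Hs'y Hs'v].
    replace (y - y') with ((y - v) + (v - y')) by ring.
    eapply Rle_trans; [apply Cmod_triangle|].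
    generalize (cylinder_dist_le m d lam Hlam B HdB s k y v Hsy Hsv)
               (cylinder_dist_le m d lam Hlam B HdB s' k v y' Hs'v Hs'y).
    unfold M. lra. }
  destruct Hy as [Hy | Hy]; destruct Hy' as [Hy' | Hy']; eauto.
Qed.

Lemma attractor_joins_near_points :
  lam <> 0 -> connected_set (attractor m d lam) ->
  forall z0 z1, attractor m d lam z0 -> attractor m d lam z1 -> z0 <> z1 ->
  (Cmod (z0 - z1) < c)%R -> joins_within (attractor m d lam) (4 * M / (c * Cmod lam)) z0 z1.
Proof.
  intros Hlam0 Hconn z0 z1 [a [Ha Hz0]] [b [Hb Hz1]] Hne Hnear.
  assert (Hr : (0 < Cmod lam)%R) by (apply Cmod_gt_0; exact Hlam0).
  assert (Hd0 : (0 < Cmod (z0 - z1))%R) by (apply Cmod_sub_pos; exact Hne).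
  destruct (pow_lt_1_zero (Cmod lam) ltac:(rewrite Rabs_pos_eq; lra) (Cmod (z0 - z1) / c)%R)
    as [N HN]; [apply Rdiv_lt_0_compat; lra|].
  specialize (HN N (le_n N)). rewrite Rabs_pos_eq in HN by (apply pow_le; lra).
  (* the scale k with c |lam|^(k+1) <= |z0 - z1| < c |lam|^k *)
  set (Q := fun j => (Cmod (z0 - z1) < c * Cmod lam ^ j)%R).
  destruct (crossing_index Q 0 N) as [k [_ [Qk Qk1]]].
  { unfold Q. simpl. lra. }
  { unfold Q. simpl. intros Hlt.
    apply (Rmult_lt_compat_l c) in HN; [|lra].
    replace (c * (Cmod (z0 - z1) / c))%R with (Cmod (z0 - z1)) in HN by (field; lra). lra. }
  unfold Q in Qk, Qk1. simpl in Qk1.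
  assert (Hmeet : exists v, cylinder m d lam a k v /\ cylinder m d lam b k v).
  { apply NNPP. intros Hdisj.
    generalize (cylinder_separation m d lam Hlam B HdB c Hc k a b z0 z1 Ha Hb Hz0 Hz1 Hdisj).
    lra. }
  destruct Hmeet as [v [Hav Hbv]].
  exists (fun z => cylinder m d lam a k z \/ cylinder m d lam b k z).
  split.
  { intros z [Hz | Hz].
    - exact (attractor_of_cylinder m d lam Hlam B HdB a k z Ha Hz).
    - exact (attractor_of_cylinder m d lam Hlam B HdB b k z Hb Hz). }
  split; [apply (connected_union _ _ v); auto; apply connected_cylinder, Hconn|].
  split; [left; exact (cylinder_of_pseries m d lam Hlam B HdB a z0 k Ha Hz0)|].
  split; [right; exact (cylinder_of_pseries m d lam Hlam B HdB b z1 k Hb Hz1)|].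
  intros y y' Hy Hy'.
  eapply Rle_trans; [exact (meeting_cylinders_dist_le a b k v y y' Hav Hbv Hy Hy')|].
  assert (HM : (0 <= M)%R).
  { unfold M. apply Rdiv_le_0_compat; [|lra].
    destruct (Ha O) as [i [Hi _]]. generalize (HdB i Hi) (Cmod_ge_0 (d i)). lra. }
  replace (Cmod lam ^ k * (4 * M))%R
    with (4 * M / (c * Cmod lam) * (c * (Cmod lam * Cmod lam ^ k)))%R by (field; lra).
  apply Rmult_le_compat_l; [apply Rdiv_le_0_compat; nra | lra].
Qed.

Lemma attractor_separated_at_zero :
  lam = 0 -> forall z0 z1, attractor m d lam z0 -> attractor m d lam z1 -> z0 <> z1 ->
  (c <= Cmod (z0 - z1))%R.
Proof.
  intros ->.
  assert (HDD : forall s, digits m d s -> forall k, (Cmod (s k) <= B)%R)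
    by exact (digits_norm_le m d B HdB).
  intros z0 z1 [a [Ha Hz0]] [b [Hb Hz1]] Hne.
  assert (HgB : in_B m d (fun j => a j - b j)).
  { split.
    - intros j. destruct (Ha j) as [i [Hi ->]]. destruct (Hb j) as [i' [Hi' ->]]. now exists i, i'.
    - rewrite <- (pseries_sum_at_0 B a z0), <- (pseries_sum_at_0 B b z1); auto. intros E. apply Hne.
      apply (f_equal (fun z => z + z1)) in E. ring_simplify in E. exact E. }
  (* F is empty when lam = 0: the sum of f at 0 is its constant coefficient *)
  assert (Hout : prefix_outside_F m d 0 0 (fun j => a j - b j)).
  { intros f [[HfDD Hf0] Hf]. exfalso. apply Hf0. symmetry.
    apply (pseries_sum_at_0 (2 * B) f 0); [|exact Hf].
    intros k. exact (DD_norm_le m d B HdB _ (HfDD k)). }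
  generalize (Hc O _ HgB Hout _ (pseries_sum_minus 0 a b z0 z1 Hz0 Hz1)). simpl. lra.
Qed.

End BoundedTurning.

Theorem theorem6p1 (m : nat) (d : nat -> C) (lam : C)
  (Hm : (2 <= m)%nat)
  (Hd : forall i j, (i < m)%nat -> (j < m)%nat -> d i = d j -> i = j)
  (Hlam : (Cmod lam < 1)%R)
  (Hconn : connected_set (attractor m d lam))
  (Hfin : finite_set (overlap m d lam))
  (HC1 : exists C1 : R, (0 < C1)%R /\ exists N : nat, forall n : nat, (N <= n)%nat ->
     forall f g : nat -> C, in_F m d lam f -> in_B m d g -> common_part f g n ->
     forall v, pseries_sum g lam v -> (C1 * Cmod lam ^ n <= Cmod v)%R) :
  bounded_turning (attractor m d lam).
Proof.
  destruct HC1 as [C1 [HC1 [N HN]]].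
  destruct (digit_bound m d) as [B [HB0 HdB]].
  destruct (prefix_outside_F_lower_bound m d lam Hlam B HdB C1 N HC1 HN) as [c [Hc0 Hc]].
  set (M := (B / (1 - Cmod lam))%R).
  assert (HM : (0 <= M)%R) by (apply Rdiv_le_0_compat; lra).
  assert (HE : forall z, attractor m d lam z -> (Cmod z <= M)%R)
    by exact (attractor_norm_le m d lam Hlam B HdB).
  destruct (Ceq_dec lam 0) as [Hlam0 | Hlam0].
  - apply (bounded_turning_of_local _ M c 0); auto; [lra|].
    intros z0 z1 H0 H1 Hne Hnear. exfalso.
    generalize (attractor_separated_at_zero m d lam Hlam B HdB c Hc Hlam0 z0 z1 H0 H1 Hne). lra.
  - assert (Hr : (0 < Cmod lam)%R) by (apply Cmod_gt_0; exact Hlam0).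
    apply (bounded_turning_of_local _ M c (4 * M / (c * Cmod lam))); auto.
    + apply Rdiv_le_0_compat; nra.
    + exact (attractor_joins_near_points m d lam Hlam B HdB c Hc0 Hc Hlam0 Hconn).
Qed.
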